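(* Let $y_1, \ldots, y_n \in \mathfrak m$ be a minimal system of generators of $\mathfrak m$ (so $R = k[[y_1,\ldots,y_n]]$). Then, after possibly reordering $y_1, \ldots, y_n$, there exist elements $x_1, \ldots, x_n \in R$ and $z_1, \ldots, z_n \in R$ such that for all $i = 1, \ldots, n$: (1) $v(x_i) = a_i$; (2) $z_i \in k[x_1, \ldots, x_{i-1}]$ (a polynomial in $x_1,\ldots,x_{i-1}$), with $z_1 = 0$; (3) $y_i = x_i + z_i$.
   Context: Let $k$ be a field and let $(R,\mathfrak m)$ be a complete local noetherian domain of dimension $1$ containing $k$ with $R/\mathfrak m = k$, with normalization $\overline R$ having residue field $k$, so $\overline R = k[[t]]$ and $R \subseteq k[[t]]$ is finite birational. Let $v$ be the $t$-adic valuation. For $A \subseteq k((t))$ let $v(A) = \{v(f): f\in A\setminus\{0\}\}$. The Herzog–Kunz sequence of $R$ is $v(\mathfrak m)\setminus v(\mathfrak m^2)$ listed increasingly as $a_1 < \cdots < a_n$ (with $n = \mathrm{edim}(R)$). For $y_i\in\mathfrak m$, $k[[y_1,\ldots,y_n]]$ is the image of $k[[Y_1,\ldots,Y_n]]\to k[[t]]$, $Y_i\mapsto y_i$. *)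

From mathcomp Require Import all_boot all_order all_algebra all_fingroup.
Set Implicit Arguments. Unset Strict Implicit. Unset Printing Implicit Defensive.
Import GRing.Theory.
Local Open Scope ring_scope.

Section PS.
Variable k : fieldType.

Definition ps := nat -> k.

Definition psC (c : k) : ps := fun m => if m == 0%N then c else 0.
Definition psadd (f g : ps) : ps := fun m => f m + g m.
Definition psscale (c : k) (f : ps) : ps := fun m => c * f m.
Definition psmul (f g : ps) : ps := fun m => \sum_(j < m.+1) f j * g (m - j)%N.
Definition psexp (f : ps) (e : nat) : ps := iter e (psmul f) (psC 1).

Definition psmon (n : nat) (x : 'I_n -> ps) (al : {ffun 'I_n -> nat}) : ps :=
  \big[psmul/psC 1]_(j < n) psexp (x j) (al j).

Definition has_val (f : ps) (m : nat) : Prop :=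
  f m != 0 /\ forall j, (j < m)%N -> f j = 0.

(* Image of sum_al c_al Y^al under k[[Y_1..Y_n]] -> k[[t]], Y_j |-> x_j,
   for x_j with zero constant term: its t^m coefficient only involves
   the monomials of total degree <= m. *)
Definition pssubst (n : nat) (x : 'I_n -> ps) (c : {ffun 'I_n -> nat} -> k) : ps :=
  fun m => \sum_(al : {ffun 'I_n -> 'I_m.+1} | (\sum_(j < n) val (al j) <= m)%N)
             c [ffun j => val (al j)] * psmon x [ffun j => val (al j)] m.

Definition in_psalg (n : nat) (x : 'I_n -> ps) (f : ps) : Prop :=
  exists c, f =1 pssubst x c.

(* f ∈ k[x_j : j < i] (polynomial in x_1, ..., x_i) *)
Definition in_polyalg (n : nat) (x : 'I_n -> ps) (i : nat) (f : ps) : Prop :=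
  exists s : seq (k * {ffun 'I_n -> nat}),
    (forall p, p \in s -> forall j : 'I_n, (i <= j)%N -> p.2 j = 0%N) /\
    f =1 \big[psadd/psC 0]_(p <- s) psscale p.1 (psmon x p.2).

Definition max_ideal (R : ps -> Prop) (f : ps) : Prop := R f /\ f 0%N = 0.

Definition max_ideal2 (R : ps -> Prop) (f : ps) : Prop :=
  exists N (a b : 'I_N -> ps),
    (forall j, max_ideal R (a j) /\ max_ideal R (b j)) /\
    f =1 \big[psadd/psC 0]_(j < N) psmul (a j) (b j).

Definition vset (A : ps -> Prop) (m : nat) : Prop := exists f, A f /\ has_val f m.

Definition HK (R : ps -> Prop) (m : nat) : Prop :=
  vset (max_ideal R) m /\ ~ vset (max_ideal2 R) m.

Definition generates_max (R : ps -> Prop) (n : nat) (P : pred 'I_n) (y : 'I_n -> ps) :=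
  forall f, max_ideal R f ->
    exists r : 'I_n -> ps, (forall i, R (r i)) /\
      f =1 \big[psadd/psC 0]_(i < n | P i) psmul (r i) (y i).

Definition min_gen_sys (R : ps -> Prop) (n : nat) (y : 'I_n -> ps) : Prop :=
  (forall i, max_ideal R (y i)) /\ generates_max R predT y /\
  forall j, ~ generates_max R (predC1 j) y.

Definition finite_over (R : ps -> Prop) : Prop :=
  exists N (e : 'I_N -> ps), forall f, exists r : 'I_N -> ps,
    (forall j, R (r j)) /\ f =1 \big[psadd/psC 0]_(j < N) psmul (r j) (e j).

(* Frac(R) = k((t)): every power series is a quotient of elements of R *)
Definition birational (R : ps -> Prop) : Prop :=
  forall f, exists g h, R g /\ R h /\ ~ (h =1 psC 0) /\ psmul f h =1 g.

End PS.

From HB Require Import structures.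
From mathcomp Require Import all_boot all_order all_algebra all_fingroup.
From mathcomp Require Import boolp ring zify.
Set Implicit Arguments. Unset Strict Implicit. Unset Printing Implicit Defensive.
Import GRing.Theory.
Local Open Scope ring_scope.

(* The x_i are built one at a time.  Once x_l with v(x_l) = a_l are known for l < i,
   every f in m agrees up to order a_i with a polynomial in the x_l without constant
   term: the first discrepancy N < a_i is either a Herzog-Kunz value a_l, cancelled by
   x_l, or the value of an element of m^2, which is approximated to order N + 1 by
   products of approximations of its factors.  If no generator y_j not used so far had
   v(y_j - p) = a_i for such an approximation p, then an element of m of value a_i,
   written as sum r_j y_j, would agree beyond order a_i with a linear combination of
   the x_l plus an element of m^2, and comparing values would put a_i or some a_l into
   v(m^2). *)

Section PowerSeriesRing.
Variable k : fieldType.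

HB.instance Definition _ := Choice.on (ps k).

Definition psopp (f : ps k) : ps k := fun m => - f m.

Lemma psaddA : associative (@psadd k).
Proof. by move=> f g h; apply: funext => m; rewrite /psadd addrA. Qed.
Lemma psaddC : commutative (@psadd k).
Proof. by move=> f g; apply: funext => m; rewrite /psadd addrC. Qed.
Lemma psadd0 : left_id (psC 0) (@psadd k).
Proof. by move=> f; apply: funext => m; rewrite /psadd /psC; case: eqP; rewrite add0r. Qed.
Lemma psaddN : left_inverse (psC 0) psopp (@psadd k).
Proof. by move=> f; apply: funext => m; rewrite /psadd /psC /psopp addNr; case: eqP. Qed.
HB.instance Definition _ := GRing.isZmodule.Build (ps k) psaddA psaddC psadd0 psaddN.

Definition ps_trunc (m : nat) (f : ps k) : {poly k} := \poly_(i < m.+1) f i.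

Lemma coef_ps_trunc m f i : (i <= m)%N -> (ps_trunc m f)`_i = f i.
Proof. by move=> le_im; rewrite coef_poly ltnS le_im. Qed.

Lemma psmul_polyE (f g : ps k) (p q : {poly k}) m :
    (forall i, (i <= m)%N -> p`_i = f i) -> (forall i, (i <= m)%N -> q`_i = g i) ->
  psmul f g m = (p * q)`_m.
Proof.
move=> pf qg; rewrite coefM /psmul; apply: eq_bigr => j _.
by rewrite pf ?qg ?leq_subr // -ltnS.
Qed.

Lemma psmul_truncE (f g : ps k) m i :
  (i <= m)%N -> psmul f g i = (ps_trunc m f * ps_trunc m g)`_i.
Proof.
by move=> le_im; apply: psmul_polyE => j le_ji; rewrite coef_ps_trunc ?(leq_trans le_ji).
Qed.

Lemma psmulA : associative (@psmul k).
Proof.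
move=> f g h; apply: funext => m.
rewrite (@psmul_polyE _ _ (ps_trunc m f) (ps_trunc m g * ps_trunc m h)); last 2 first.
- by move=> i le_im; rewrite coef_ps_trunc.
- by move=> i le_im; rewrite (psmul_truncE _ _ le_im).
rewrite (@psmul_polyE _ _ (ps_trunc m f * ps_trunc m g) (ps_trunc m h)) ?mulrA //.
- by move=> i le_im; rewrite (psmul_truncE _ _ le_im).
- by move=> i le_im; rewrite coef_ps_trunc.
Qed.

Lemma psmulC : commutative (@psmul k).
Proof. by move=> f g; apply: funext => m; rewrite !(psmul_truncE _ _ (leqnn m)) mulrC. Qed.

Lemma psmul1 : left_id (psC 1) (@psmul k).
Proof.
move=> f; apply: funext => m.
rewrite (@psmul_polyE _ _ 1 (ps_trunc m f)) ?mul1r ?coef_ps_trunc // => i le_im.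
- by rewrite coefC /psC; case: eqP.
- by rewrite coef_ps_trunc.
Qed.

Lemma psmulDl : left_distributive (@psmul k) (@psadd k).
Proof.
move=> f g h; apply: funext => m.
rewrite /psadd (@psmul_polyE _ _ (ps_trunc m f + ps_trunc m g) (ps_trunc m h)).
- by rewrite mulrDl coefD -!(psmul_truncE _ _ (leqnn m)).
- by move=> i le_im; rewrite coefD !coef_ps_trunc.
- by move=> i le_im; rewrite coef_ps_trunc.
Qed.

Lemma psC1_neq0 : psC (1 : k) != psC 0.
Proof. by apply/eqP => /(congr1 (fun f => f 0%N)); rewrite /psC /= => /eqP; rewrite oner_eq0. Qed.

HB.instance Definition _ :=
  GRing.Zmodule_isComNzRing.Build (ps k) psmulA psmulC psmul1 psmulDl psC1_neq0.

Lemma psmulE (f g : ps k) : psmul f g = f * g. Proof. by []. Qed.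
Lemma psC0E : psC 0 = 0 :> ps k. Proof. by []. Qed.
Lemma psC1E : psC 1 = 1 :> ps k. Proof. by []. Qed.

Lemma big_psaddE I (r : seq I) (P : pred I) (F : I -> ps k) :
  \big[@psadd k/psC 0]_(i <- r | P i) F i = \sum_(i <- r | P i) F i.
Proof. by []. Qed.

Lemma psexpE (f : ps k) e : psexp f e = f ^+ e.
Proof. by elim: e => //= e IH; rewrite /psexp /= -/(psexp f e) IH exprS. Qed.

Lemma psmonE n (x : 'I_n -> ps k) al : psmon x al = \prod_(j < n) x j ^+ al j.
Proof. by apply: eq_bigr => j _; rewrite psexpE. Qed.

Lemma pscoefD (f g : ps k) m : (f + g) m = f m + g m. Proof. by []. Qed.
Lemma pscoefN (f : ps k) m : (- f) m = - f m. Proof. by []. Qed.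
Lemma pscoefB (f g : ps k) m : (f - g) m = f m - g m. Proof. by []. Qed.
Lemma pscoef0 m : (0 : ps k) m = 0. Proof. by case: m. Qed.

Lemma pscoef_sum I (r : seq I) (P : pred I) (F : I -> ps k) m :
  (\sum_(i <- r | P i) F i) m = \sum_(i <- r | P i) F i m.
Proof. by apply: (big_morph (fun f : ps k => f m)) => //; rewrite pscoef0. Qed.

Lemma pscoefCM (c : k) (f : ps k) m : (psC c * f) m = c * f m.
Proof.
rewrite -psmulE (@psmul_polyE _ _ c%:P (ps_trunc m f)) ?coefCM ?coef_ps_trunc // => i le_im.
  by rewrite coefC /psC; case: eqP.
by rewrite coef_ps_trunc.
Qed.

Lemma psscaleE (c : k) (f : ps k) : psscale c f = psC c * f.
Proof. by apply: funext => m; rewrite pscoefCM. Qed.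

Lemma psCM (a b : k) : psC (a * b) = psC a * psC b.
Proof. by apply: funext => m; rewrite pscoefCM /psC; case: eqP; rewrite ?mulr0. Qed.

Lemma psCD (a b : k) : psC (a + b) = psC a + psC b.
Proof. by apply: funext => m; rewrite pscoefD /psC; case: eqP; rewrite ?addr0. Qed.

Lemma psCN1M (f : ps k) : psC (-1) * f = - f.
Proof. by apply: funext => m; rewrite pscoefCM pscoefN mulN1r. Qed.

Lemma pscoefM0 (f g : ps k) : (f * g) 0%N = f 0%N * g 0%N.
Proof. by rewrite -psmulE /psmul big_ord1 subn0. Qed.

End PowerSeriesRing.

Section ZeroBelow.
Variable k : fieldType.

Definition zero_below (N : nat) (f : ps k) := forall j, (j < N)%N -> f j = 0.

Lemma zero_belowM a b (f g : ps k) :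
  zero_below a f -> zero_below b g -> zero_below (a + b) (f * g).
Proof.
move=> fa gb j lt_j_ab; rewrite -psmulE /psmul big1 // => i _.
have [lt_ia|le_ai] := ltnP i a; first by rewrite fa // mul0r.
rewrite gb ?mulr0 //; have := ltn_ord i; lia.
Qed.

Lemma zero_belowX a e (f : ps k) : zero_below a f -> zero_below (a * e) (f ^+ e).
Proof.
move=> fa; elim: e => [|e IH]; first by rewrite muln0.
by rewrite exprS mulnS; apply: zero_belowM.
Qed.

Lemma zero_belowW a b (f : ps k) : (b <= a)%N -> zero_below a f -> zero_below b f.
Proof. by move=> le_ba fa j lt_jb; apply/fa/(leq_trans lt_jb). Qed.

Lemma zero_below0 N : zero_below N (0 : ps k).
Proof. by move=> j _; rewrite pscoef0. Qed.

Lemma zero_belowD N (f g : ps k) :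
  zero_below N f -> zero_below N g -> zero_below N (f + g).
Proof. by move=> fN gN j lt_jN; rewrite pscoefD fN ?gN ?addr0. Qed.

Lemma zero_belowB N (f g : ps k) :
  zero_below N f -> zero_below N g -> zero_below N (f - g).
Proof. by move=> fN gN j lt_jN; rewrite pscoefB fN ?gN ?subr0. Qed.

Lemma zero_belowCM N c (f : ps k) : zero_below N f -> zero_below N (psC c * f).
Proof. by move=> fN j lt_jN; rewrite pscoefCM fN ?mulr0. Qed.

Lemma zero_below_sum N I (r : seq I) (P : pred I) (F : I -> ps k) :
  (forall i, P i -> zero_below N (F i)) -> zero_below N (\sum_(i <- r | P i) F i).
Proof. by move=> FN; apply: big_ind => //; [exact: zero_below0 | exact: zero_belowD]. Qed.

Lemma zero_below_cancel_lead N (f g : ps k) :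
  zero_below N f -> zero_below N g -> g N != 0 ->
  zero_below N.+1 (f - psC (f N / g N) * g).
Proof.
move=> fN gN gN0 j; rewrite ltnS leq_eqVlt => /predU1P[->|lt_jN].
  by rewrite pscoefB pscoefCM mulfVK // subrr.
by rewrite pscoefB pscoefCM (fN j lt_jN) (gN j lt_jN) mulr0 subrr.
Qed.

End ZeroBelow.

Section Substitution.
Variables (k : fieldType) (n : nat) (x : 'I_n -> ps k).
Hypothesis x0 : forall j, x j 0%N = 0.

Definition mdeg (al : {ffun 'I_n -> nat}) := (\sum_(j < n) al j)%N.
Definition ffval m (al : {ffun 'I_n -> 'I_m.+1}) : {ffun 'I_n -> nat} :=
  [ffun j => val (al j)].
Definition ffadd (al be : {ffun 'I_n -> nat}) : {ffun 'I_n -> nat} :=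
  [ffun j => (al j + be j)%N].
Definition ffsub (al be : {ffun 'I_n -> nat}) : {ffun 'I_n -> nat} :=
  [ffun j => (al j - be j)%N].

Lemma leq_mdeg (al : {ffun 'I_n -> nat}) j : (al j <= mdeg al)%N.
Proof. by rewrite /mdeg (bigD1 j) //= leq_addr. Qed.

Lemma mdeg_ffadd (al be : {ffun 'I_n -> nat}) :
  mdeg (ffadd al be) = (mdeg al + mdeg be)%N.
Proof. by rewrite /mdeg -big_split; apply: eq_bigr => j _; rewrite ffunE. Qed.

Lemma ffval_inj m : injective (@ffval m).
Proof.
move=> al be /ffunP eq_ab; apply/ffunP => j; apply: val_inj.
by have := eq_ab j; rewrite !ffunE.
Qed.

Lemma ffsub_ffadd (al be : {ffun 'I_n -> nat}) : ffsub (ffadd al be) al = be.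
Proof. by apply/ffunP => j; rewrite !ffunE addKn. Qed.

Lemma ffadd_ffsub (al ga : {ffun 'I_n -> nat}) :
  (forall j, al j <= ga j)%N -> ffadd al (ffsub ga al) = ga.
Proof. by move=> le_ag; apply/ffunP => j; rewrite !ffunE subnKC. Qed.

Lemma psmon_zero_below (al : {ffun 'I_n -> nat}) : zero_below (mdeg al) (psmon x al).
Proof.
rewrite psmonE /mdeg; apply: (big_ind2 (fun N f => zero_below N f)) => //.
  by move=> ? ? ? ? ? ?; apply: zero_belowM.
move=> j _; have x1 : zero_below 1 (x j) by move=> i; rewrite ltnS leqn0 => /eqP ->.
by have := @zero_belowX _ 1 (al j) _ x1; rewrite mul1n.
Qed.

Lemma psmon_ffadd (al be : {ffun 'I_n -> nat}) :
  psmon x (ffadd al be) = psmon x al * psmon x be.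
Proof. by rewrite !psmonE -big_split; apply: eq_bigr => j _; rewrite ffunE exprD. Qed.

Lemma psmon0 : psmon x [ffun=> 0%N] = 1.
Proof. by rewrite psmonE big1 // => j _; rewrite ffunE expr0. Qed.

Lemma pssubstE c m : pssubst x c m =
  \sum_(al : {ffun 'I_n -> 'I_m.+1} | (mdeg (ffval al) <= m)%N)
     c (ffval al) * psmon x (ffval al) m.
Proof.
by apply: eq_bigl => al; rewrite /mdeg; congr (_ <= _)%N; apply: eq_bigr => j _; rewrite ffunE.
Qed.

Lemma sum_ffval_shrink m M (P : pred {ffun 'I_n -> nat}) (F : {ffun 'I_n -> nat} -> k) :
    (m <= M)%N -> (forall al, P al -> forall j, (al j <= m)%N) ->
  \sum_(al : {ffun 'I_n -> 'I_M.+1} | P (ffval al)) F (ffval al) =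
  \sum_(al : {ffun 'I_n -> 'I_m.+1} | P (ffval al)) F (ffval al).
Proof.
move=> le_mM Pm.
pose widen (al : {ffun 'I_n -> 'I_m.+1}) : {ffun 'I_n -> 'I_M.+1} :=
  [ffun j => widen_ord (le_mM : (m.+1 <= M.+1)%N) (al j)].
have ffval_widen al : ffval (widen al) = ffval al by apply/ffunP => j; rewrite !ffunE.
rewrite (reindex widen) /=; first by apply: eq_big => al; rewrite ffval_widen.
exists (fun al : {ffun 'I_n -> 'I_M.+1} => [ffun j => inord (val (al j))]).
  by move=> al _; apply/ffunP => j; rewrite !ffunE /= inord_val.
move=> al; rewrite inE => Pal; apply/ffunP => j; apply: val_inj.
by rewrite !ffunE /= inordK // ltnS; have := Pm _ Pal j; rewrite ffunE.
Qed.

Lemma pssubst_widen c m M : (m <= M)%N -> pssubst x c m =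
  \sum_(al : {ffun 'I_n -> 'I_M.+1} | (mdeg (ffval al) <= M)%N)
     c (ffval al) * psmon x (ffval al) m.
Proof.
move=> le_mM.
rewrite (bigID (fun al => mdeg (ffval al) <= m)%N) /= [X in _ + X]big1 ?addr0; last first.
  by move=> al /andP[_]; rewrite -ltnNge => lt_m; rewrite psmon_zero_below ?mulr0.
rewrite (eq_bigl (fun al => mdeg (ffval al) <= m)%N); last first.
  move=> al; case: (leqP (mdeg (ffval al)) m) => [le_m|]; rewrite ?andbF ?andbT //.
  exact: leq_trans le_m le_mM.
rewrite (@sum_ffval_shrink m M (fun al => mdeg al <= m)%N (fun al => c al * psmon x al m))
  ?pssubstE //.
by move=> al le_m j; apply: leq_trans le_m; apply: leq_mdeg.
Qed.

Lemma pssubst_truncE c m j : (j <= m)%N -> pssubst x c j =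
  (\sum_(al : {ffun 'I_n -> 'I_m.+1} | (mdeg (ffval al) <= m)%N)
     psC (c (ffval al)) * psmon x (ffval al)) j.
Proof.
move=> le_jm; rewrite (pssubst_widen c le_jm) pscoef_sum.
by apply: eq_bigr => al _; rewrite pscoefCM.
Qed.

Lemma pssubst_single (be : {ffun 'I_n -> nat}) (b : k) m :
  pssubst x (fun al => if al == be then b else 0) m = b * psmon x be m.
Proof.
rewrite pssubstE; have [le_be_m|lt_m_be] := leqP (mdeg be) m; last first.
  rewrite psmon_zero_below ?mulr0 // big1 // => al le_al.
  case: eqP => [eq_al|]; last by rewrite mul0r.
  by rewrite -eq_al ltnNge le_al in lt_m_be.
pose al0 : {ffun 'I_n -> 'I_m.+1} := [ffun j => inord (be j)].
have ffval_al0 : ffval al0 = be.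
  apply/ffunP => j; rewrite !ffunE /= inordK // ltnS.
  exact: leq_trans (leq_mdeg be j) le_be_m.
rewrite (bigD1 al0) /= ffval_al0 ?eqxx ?big1 ?addr0 // => al /andP[_ ne_al].
case: eqP => [eq_al|]; last by rewrite mul0r.
by rewrite -ffval_al0 in eq_al; rewrite (ffval_inj eq_al) eqxx in ne_al.
Qed.

Lemma in_psalgC b : in_psalg x (psC b).
Proof.
exists (fun al => if al == [ffun=> 0%N] then b else 0) => m.
by rewrite pssubst_single psmon0; case: m => [|m]; rewrite /psC /= ?mulr1 ?mulr0.
Qed.

Lemma in_psalgD (f g : ps k) : in_psalg x f -> in_psalg x g -> in_psalg x (f + g).
Proof.
move=> [c fc] [d gd]; exists (fun al => c al + d al) => m.
by rewrite pscoefD fc gd /pssubst -big_split; apply: eq_bigr => al _; rewrite mulrDl.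
Qed.

Definition ffaddo m (al be : {ffun 'I_n -> 'I_m.+1}) : {ffun 'I_n -> 'I_m.+1} :=
  [ffun j => inord (val (al j) + val (be j))].
Definition ffsubo m (ga al : {ffun 'I_n -> 'I_m.+1}) : {ffun 'I_n -> 'I_m.+1} :=
  [ffun j => inord (val (ga j) - val (al j))].

Lemma ffval_ffaddo m (al be : {ffun 'I_n -> 'I_m.+1}) :
  (mdeg (ffadd (ffval al) (ffval be)) <= m)%N ->
  ffval (ffaddo al be) = ffadd (ffval al) (ffval be).
Proof.
move=> le_m; apply/ffunP => j; rewrite !ffunE /= inordK // ltnS.
by apply: leq_trans le_m; have := leq_mdeg (ffadd (ffval al) (ffval be)) j; rewrite !ffunE.
Qed.

(* [inord] sends an overflowing sum to [0]; the hypothesis rules this out. *)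
Lemma ffval_ffaddo_le m (al be : {ffun 'I_n -> 'I_m.+1}) :
  (forall j, ffval al j <= ffval (ffaddo al be) j)%N ->
  ffval (ffaddo al be) = ffadd (ffval al) (ffval be).
Proof.
move=> le_al; apply/ffunP => j; have := le_al j; rewrite !ffunE /=.
have [lt_sum|ge_sum] := ltnP (val (al j) + val (be j)) m.+1; first by rewrite inordK.
rewrite /inord val_insubd ltnNge ge_sum /=; move: ge_sum.
by case: (al j) (be j) => [u ?] [v ?] /=; lia.
Qed.

Lemma sum_pairs_ffadd m (F : {ffun 'I_n -> nat} -> {ffun 'I_n -> nat} -> k) :
  \sum_(p : {ffun 'I_n -> 'I_m.+1} * {ffun 'I_n -> 'I_m.+1} |
          (mdeg (ffadd (ffval p.1) (ffval p.2)) <= m)%N) F (ffval p.1) (ffval p.2) =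
  \sum_(ga : {ffun 'I_n -> 'I_m.+1} | (mdeg (ffval ga) <= m)%N)
    \sum_(al : {ffun 'I_n -> 'I_m.+1} | [forall j, ffval al j <= ffval ga j]%N)
      F (ffval al) (ffsub (ffval ga) (ffval al)).
Proof.
rewrite pair_big_dep /= [RHS](reindex (fun p => (ffaddo p.1 p.2, p.1))) /=; last first.
  exists (fun q => (q.2, ffsubo q.1 q.2)).
    move=> [al be]; rewrite inE /= => /andP[_ /forallP le_al].
    have /ffunP eq_sum := ffval_ffaddo_le le_al.
    congr pair; apply/ffunP => j; apply: val_inj; have := eq_sum j.
    by rewrite /ffsubo /ffaddo !ffunE /= => ->; rewrite addKn inord_val.
  move=> [ga al]; rewrite inE /= => /andP[_ /forallP le_al].
  congr pair; apply/ffunP => j; rewrite /ffaddo /ffsubo !ffunE /=.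
  have := le_al j; rewrite !ffunE => le_j.
  rewrite inordK ?subnKC ?inord_val //.
  exact: leq_ltn_trans (leq_subr _ _) (ltn_ord _).
apply: eq_big => [[al be]|[al be] le_m] /=.
  apply/idP/andP => [le_m|[le_m /forallP le_al]]; last by rewrite -(ffval_ffaddo_le le_al).
  by rewrite ffval_ffaddo // le_m; split=> //; apply/forallP => j; rewrite !ffunE leq_addr.
by rewrite ffval_ffaddo // ffsub_ffadd.
Qed.

Definition psconv (c d : {ffun 'I_n -> nat} -> k) (ga : {ffun 'I_n -> nat}) : k :=
  \sum_(al : {ffun 'I_n -> 'I_(mdeg ga).+1} | [forall j, ffval al j <= ga j]%N)
     c (ffval al) * d (ffsub ga (ffval al)).

Lemma pssubstM c d : pssubst x c * pssubst x d = pssubst x (psconv c d).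
Proof.
apply: funext => m; pose trunc c := \sum_(al : {ffun 'I_n -> 'I_m.+1} |
  (mdeg (ffval al) <= m)%N) psC (c (ffval al)) * psmon x (ffval al).
have -> : (pssubst x c * pssubst x d) m = (trunc c * trunc d) m.
  rewrite -!psmulE /psmul; apply: eq_bigr => j _.
  by rewrite !(@pssubst_truncE _ m) ?leq_subr // -ltnS.
rewrite mulr_suml pscoef_sum.
under eq_bigr do rewrite mulr_sumr pscoef_sum.
under eq_bigr do under eq_bigr do rewrite mulrACA -psCM -psmon_ffadd pscoefCM.
rewrite pair_big_dep /=.
rewrite (bigID (fun p => mdeg (ffadd (ffval p.1) (ffval p.2)) <= m)%N) /=.
rewrite [X in _ + X]big1 ?addr0; last first.
  by move=> p /andP[_]; rewrite -ltnNge => lt_m; rewrite psmon_zero_below ?mulr0.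
rewrite (eq_bigl (fun p => mdeg (ffadd (ffval p.1) (ffval p.2)) <= m)%N); last first.
  move=> p; case: (leqP (mdeg (ffadd _ _)) m); rewrite ?andbF ?andbT // mdeg_ffadd => le_m.
  by apply/andP; split; apply: leq_trans le_m; rewrite ?leq_addr ?leq_addl.
rewrite (sum_pairs_ffadd m (fun al be => c al * d be * psmon x (ffadd al be) m)).
rewrite pssubstE; apply: eq_bigr => ga le_m.
rewrite (eq_bigr (fun al => c (ffval al) * d (ffsub (ffval ga) (ffval al)) * psmon x (ffval ga) m));
  last by move=> al /forallP le_al; rewrite ffadd_ffsub.
rewrite (@sum_ffval_shrink (mdeg (ffval ga)) m (fun al => [forall j, al j <= ffval ga j]%N)
  (fun al => c al * d (ffsub (ffval ga) al) * psmon x (ffval ga) m)) ?mulr_suml //.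
by move=> al /forallP le_al j; apply: leq_trans (le_al j) _; apply: leq_mdeg.
Qed.

Lemma in_psalgM (f g : ps k) : in_psalg x f -> in_psalg x g -> in_psalg x (f * g).
Proof.
move=> [c fc] [d gd]; exists (psconv c d) => m.
by rewrite -pssubstM (funext fc) (funext gd).
Qed.

End Substitution.

Inductive polyin (k : fieldType) (x : nat -> ps k) (i : nat) : ps k -> Prop :=
  | polyinC c : polyin x i (psC c)
  | polyinX l : (l < i)%N -> polyin x i (x l)
  | polyinD f g : polyin x i f -> polyin x i g -> polyin x i (f + g)
  | polyinM f g : polyin x i f -> polyin x i g -> polyin x i (f * g).

Section PolyIn.
Variables (k : fieldType) (x : nat -> ps k).

Lemma polyin0 i : polyin x i 0.
Proof. exact: (polyinC x i 0). Qed.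

Lemma polyin_sum i I (r : seq I) (P : pred I) (F : I -> ps k) :
  (forall j, P j -> polyin x i (F j)) -> polyin x i (\sum_(j <- r | P j) F j).
Proof. by move=> pF; apply: big_ind => //; [exact: polyin0 | exact: polyinD]. Qed.

Lemma polyinW i i' f : (i <= i')%N -> polyin x i f -> polyin x i' f.
Proof.
move=> le_ii'; elim=> [c|l lt_li|f1 g1 _ p1 _ p2|f1 g1 _ p1 _ p2].
- exact: polyinC.
- by apply: polyinX; apply: leq_trans le_ii'.
- exact: polyinD.
- exact: polyinM.
Qed.

Lemma eq_polyin (x' : nat -> ps k) i f :
  (forall l, (l < i)%N -> x l = x' l) -> polyin x i f -> polyin x' i f.
Proof.
move=> eq_x; elim=> [c|l lt_li|f1 g1 _ p1 _ p2|f1 g1 _ p1 _ p2].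
- exact: polyinC.
- by rewrite eq_x //; apply: polyinX.
- exact: polyinD.
- exact: polyinM.
Qed.

Lemma polyin0_const f : polyin x 0 f -> exists c, f = psC c.
Proof.
elim=> [c|//|f1 g1 _ [c1 ->] _ [c2 ->]|f1 g1 _ [c1 ->] _ [c2 ->]].
- by exists c.
- by exists (c1 + c2); rewrite psCD.
- by exists (c1 * c2); rewrite psCM.
Qed.

Lemma polyin_polyalg n i f :
  (i <= n)%N -> polyin x i f -> in_polyalg (fun j : 'I_n => x j) i f.
Proof.
move=> le_in; elim=> [c|l lt_li|f1 g1 _ [s [s_i e1]] _ [t [t_i e2]]|
                       f1 g1 _ [s [s_i e1]] _ [t [t_i e2]]].
- exists [:: (c, [ffun=> 0%N])]; split.
    by move=> p; rewrite inE => /eqP -> j _; rewrite ffunE.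
  by move=> m; rewrite big_psaddE big_seq1 /= psscaleE psmon0 mulr1.
- have lt_ln : (l < n)%N by apply: leq_trans le_in.
  exists [:: (1, [ffun j : 'I_n => nat_of_bool (val j == l)])]; split.
    move=> p; rewrite inE => /eqP -> j le_ij; rewrite ffunE.
    by case: eqP => // eq_jl; rewrite eq_jl leqNgt lt_li in le_ij.
  move=> m; rewrite big_psaddE big_seq1 /= psscaleE psC1E mul1r psmonE (bigD1 (Ordinal lt_ln)) //=.
  rewrite ffunE eqxx expr1 big1 ?mulr1 // => j ne_jl; rewrite ffunE.
  case: eqP => [eq_jl|]; last by rewrite expr0.
  by move/eqP: ne_jl; case; apply: val_inj.
- exists (s ++ t); split; first by move=> p; rewrite mem_cat => /orP[/s_i|/t_i].
  by move=> m; rewrite big_psaddE big_cat pscoefD e1 e2.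
- exists [seq (p.1 * q.1, ffadd p.2 q.2) | p <- s, q <- t]; split.
    move=> p /allpairsP[[p1 q1] [p1s q1t ->]] j le_ij /=.
    by rewrite ffunE (s_i _ p1s j le_ij) (t_i _ q1t j le_ij).
  rewrite (funext e1) (funext e2) !big_psaddE => m; rewrite big_allpairs_dep /= mulr_suml.
  congr (_ m); apply: eq_bigr => p _; rewrite mulr_sumr; apply: eq_bigr => q _.
  by rewrite !psscaleE psmon_ffadd psCM mulrACA.
Qed.

End PolyIn.

Section MaximalIdeal.
Variables (k : fieldType) (n : nat) (y : 'I_n -> ps k).
Hypothesis y0 : forall j, y j 0%N = 0.
Local Notation R := (in_psalg y).

Lemma in_psalgN (f : ps k) : R f -> R (- f).
Proof. by move=> Rf; rewrite -psCN1M; apply: in_psalgM => //; apply: in_psalgC. Qed.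

Lemma in_psalgB (f g : ps k) : R f -> R g -> R (f - g).
Proof. by move=> Rf Rg; apply: in_psalgD => //; apply: in_psalgN. Qed.

Lemma in_psalg_sum I (r : seq I) (P : pred I) (F : I -> ps k) :
  (forall i, P i -> R (F i)) -> R (\sum_(i <- r | P i) F i).
Proof. by move=> RF; apply: big_ind => //; [exact: in_psalgC 0 | exact: in_psalgD]. Qed.

Lemma polyin_psalg (x : nat -> ps k) i f :
  (forall l, (l < i)%N -> R (x l)) -> polyin x i f -> R f.
Proof.
move=> Rx; elim=> [c|l lt_li|f1 g1 _ R1 _ R2|f1 g1 _ R1 _ R2].
- exact: in_psalgC.
- exact: Rx.
- exact: in_psalgD.
- exact: in_psalgM.
Qed.

Lemma max_idealB (f g : ps k) : max_ideal R f -> max_ideal R g -> max_ideal R (f - g).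
Proof. by move=> [Rf f0] [Rg g0]; split; [exact: in_psalgB | rewrite pscoefB f0 g0 subr0]. Qed.

Lemma max_idealMl (r f : ps k) : R r -> max_ideal R f -> max_ideal R (r * f).
Proof. by move=> Rr [Rf f0]; split; [apply: in_psalgM | rewrite pscoefM0 f0 mulr0]. Qed.

Lemma max_ideal_zero_below (f : ps k) : max_ideal R f -> zero_below 1 f.
Proof. by move=> [_ f0] j; rewrite ltnS leqn0 => /eqP ->. Qed.

Definition max_ideal2_seq (f : ps k) := exists s : seq (ps k * ps k),
  (forall p, p \in s -> max_ideal R p.1 /\ max_ideal R p.2) /\ f = \sum_(p <- s) p.1 * p.2.

Lemma max_ideal2_seqP (f : ps k) : max_ideal2 R f <-> max_ideal2_seq f.
Proof.
split=> [[N [a [b [m_ab e]]]]|[s [m_s ->]]].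
  exists [seq (a j, b j) | j <- index_enum 'I_N]; split.
    by move=> p /mapP[j _ ->]; apply: m_ab.
  by rewrite big_map; apply: funext => m; rewrite e.
exists (size s), (fun j => (nth (0, 0) s j).1), (fun j => (nth (0, 0) s j).2); split.
  by move=> j; apply/m_s/mem_nth.
by move=> m; rewrite (big_nth (0, 0)) big_mkord.
Qed.

Lemma max_ideal2_seq0 : max_ideal2_seq 0.
Proof. by exists [::]; rewrite big_nil. Qed.

Lemma max_ideal2_seqD (f g : ps k) :
  max_ideal2_seq f -> max_ideal2_seq g -> max_ideal2_seq (f + g).
Proof.
move=> [s [m_s ->]] [t [m_t ->]]; exists (s ++ t); rewrite big_cat; split=> // p.
by rewrite mem_cat => /orP[/m_s|/m_t].
Qed.

Lemma max_ideal2_seq_sum I (r : seq I) (P : pred I) (F : I -> ps k) :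
  (forall i, P i -> max_ideal2_seq (F i)) -> max_ideal2_seq (\sum_(i <- r | P i) F i).
Proof. by move=> mF; apply: big_ind => //; [exact: max_ideal2_seq0 | exact: max_ideal2_seqD]. Qed.

Lemma max_ideal2_seqM (f g : ps k) :
  max_ideal R f -> max_ideal R g -> max_ideal2_seq (f * g).
Proof.
by move=> mf mg; exists [:: (f, g)]; rewrite big_seq1; split=> // p; rewrite inE => /eqP ->.
Qed.

Lemma max_ideal2_seqMl (r f : ps k) : R r -> max_ideal2_seq f -> max_ideal2_seq (r * f).
Proof.
move=> Rr [s [m_s ->]]; exists [seq (r * p.1, p.2) | p <- s]; split.
  by move=> p /mapP[q /m_s[m1 m2] ->]; split=> //; apply: max_idealMl.
by rewrite big_map mulr_sumr; apply: eq_bigr => p _; rewrite mulrA.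
Qed.

Lemma max_ideal2_seq_max_ideal (f : ps k) : max_ideal2_seq f -> max_ideal R f.
Proof.
move=> [s [m_s ->]]; rewrite big_seq; split.
  by apply: in_psalg_sum => p /m_s[[R1 _] [R2 _]]; apply: in_psalgM.
by rewrite pscoef_sum big1 // => p /m_s[[_ p0] _]; rewrite pscoefM0 p0 mul0r.
Qed.

Section Linearization.
Variables (x : nat -> ps k) (i : nat).
Hypothesis x_max : forall l, (l < i)%N -> max_ideal R (x l).

Definition lincomb (d : nat -> k) : ps k := \sum_(l < i) psC (d l) * x l.

Definition affine_mod_sqr (f : ps k) :=
  exists c0 (d : nat -> k) u, max_ideal2_seq u /\ f = psC c0 + lincomb d + u.

Lemma lincomb_max_ideal d : max_ideal R (lincomb d).
Proof.
split; first by apply: in_psalg_sum => l _; apply: (in_psalgM y0) (x_max (ltn_ord l)).1;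
  apply: in_psalgC.
by rewrite /lincomb pscoef_sum big1 // => l _; rewrite pscoefCM (x_max (ltn_ord l)).2 mulr0.
Qed.

Lemma lincombD d d' : lincomb d + lincomb d' = lincomb (fun l => d l + d' l).
Proof. by rewrite -big_split; apply: eq_bigr => l _; rewrite psCD mulrDl. Qed.

Lemma lincombCM c d : psC c * lincomb d = lincomb (fun l => c * d l).
Proof. by rewrite mulr_sumr; apply: eq_bigr => l _; rewrite psCM mulrA. Qed.

Lemma lincomb0 : lincomb (fun _ => 0) = 0.
Proof. by rewrite /lincomb big1 // => l _; rewrite psC0E mul0r. Qed.

Lemma affine_mod_sqrC c : affine_mod_sqr (psC c).
Proof.
by exists c, (fun _ => 0), 0; rewrite lincomb0 !addr0; split=> //; apply: max_ideal2_seq0.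
Qed.

Lemma affine_mod_sqrX l : (l < i)%N -> affine_mod_sqr (x l).
Proof.
move=> lt_li; exists 0, (fun l' => if l' == l then 1 else 0), 0.
split; first exact: max_ideal2_seq0.
rewrite /lincomb (bigD1 (Ordinal lt_li)) //= eqxx big1 ?psC0E ?psC1E ?add0r ?addr0 ?mul1r //.
move=> j ne_jl; case: eqP => [eq_jl|]; last by rewrite psC0E mul0r.
by move/eqP: ne_jl; case; apply: val_inj.
Qed.

Lemma affine_mod_sqrD f g : affine_mod_sqr f -> affine_mod_sqr g -> affine_mod_sqr (f + g).
Proof.
move=> [c [d [u [m2u ->]]]] [c' [d' [u' [m2u' ->]]]].
exists (c + c'), (fun l => d l + d' l), (u + u'); split; first exact: max_ideal2_seqD.
by rewrite psCD -lincombD; ring.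
Qed.

(* Modulo m^2 only [c * c'] and the cross terms [c * lincomb d' + c' * lincomb d] survive. *)
Lemma affine_mod_sqrM f g : affine_mod_sqr f -> affine_mod_sqr g -> affine_mod_sqr (f * g).
Proof.
move=> [c [d [u [m2u ->]]]] [c' [d' [u' [m2u' ->]]]].
exists (c * c'), (fun l => c * d' l + c' * d l),
  (lincomb d * lincomb d' + psC c * u' + lincomb d * u' + (psC c' + lincomb d' + u') * u).
split; last by rewrite psCM -lincombD -!lincombCM; ring.
have [Rd _] := lincomb_max_ideal d; have [Rd' _] := lincomb_max_ideal d'.
have [Ru' _] := max_ideal2_seq_max_ideal m2u'.
apply: max_ideal2_seqD; first apply: max_ideal2_seqD; first apply: max_ideal2_seqD.
- by apply: max_ideal2_seqM; apply: lincomb_max_ideal.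
- by apply: max_ideal2_seqMl => //; apply: in_psalgC.
- exact: max_ideal2_seqMl.
- by apply: max_ideal2_seqMl => //; do 2 apply: in_psalgD => //; apply: in_psalgC.
Qed.

Lemma polyin_affine_mod_sqr f : polyin x i f -> affine_mod_sqr f.
Proof.
elim=> [c|l lt_li|f1 g1 _ h1 _ h2|f1 g1 _ h1 _ h2].
- exact: affine_mod_sqrC.
- exact: affine_mod_sqrX.
- exact: affine_mod_sqrD.
- exact: affine_mod_sqrM.
Qed.

End Linearization.
End MaximalIdeal.

Section SquareApproximation.
Variables (k : fieldType) (n : nat) (y : 'I_n -> ps k) (x : nat -> ps k) (i N : nat).
Local Notation R := (in_psalg y).

(* [q1 q2 - F q1 F q2 = (q1 - F q1) q2 + F q1 (q2 - F q2)] and [q2], [F q1] vanish at [0]. *)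
Lemma polyin_approx_max_ideal2 :
  (forall f, max_ideal R f -> exists p, [/\ polyin x i p, p 0%N = 0 & zero_below N (f - p)]) ->
  forall h, max_ideal2_seq y h ->
  exists H, [/\ polyin x i H, H 0%N = 0 & zero_below N.+1 (h - H)].
Proof.
move=> approx h [s [m_s ->]].
have /choice[F FP] : forall q, exists Fq, max_ideal R q ->
    [/\ polyin x i Fq, Fq 0%N = 0 & zero_below N (q - Fq)].
  move=> q; case: (pselect (max_ideal R q)) => [/approx[p pP]|notm]; first by exists p.
  by exists 0 => /notm.
exists (\sum_(q <- s) F q.1 * F q.2); rewrite big_seq; split.
- by apply: polyin_sum => q /m_s[/FP[? _ _] /FP[? _ _]]; apply: polyinM.
- by rewrite pscoef_sum big1 // => q /m_s[/FP[_ F0 _] _]; rewrite pscoefM0 F0 mul0r.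
rewrite [X in X - _]big_seq -sumrB; apply: zero_below_sum => q /m_s[m1 m2].
have [_ F1_at0 F1] := FP _ m1; have [_ _ F2] := FP _ m2.
have -> : q.1 * q.2 - F q.1 * F q.2 = (q.1 - F q.1) * q.2 + F q.1 * (q.2 - F q.2) by ring.
apply: zero_belowD; first by rewrite -addn1; apply: zero_belowM F1 (max_ideal_zero_below m2).
have F1_ord1 : zero_below 1 (F q.1) by move=> j; rewrite ltnS leqn0 => /eqP ->.
by rewrite -add1n; apply: zero_belowM F1_ord1 F2.
Qed.

End SquareApproximation.

Section HerzogKunzGenerators.
Variables (k : fieldType) (n : nat) (y : 'I_n -> ps k).
Hypothesis y0 : forall j, y j 0%N = 0.
Local Notation R := (in_psalg y).
Variable a : nat -> nat.
Hypothesis a_incr : forall l l', (l < l')%N -> (l' < n)%N -> (a l < a l')%N.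
Hypothesis HK_a : forall m, HK R m <-> exists l, (l < n)%N /\ a l = m.
Variable Y : nat -> ps k.
Hypothesis Y_max : forall j, (j < n)%N -> max_ideal R (Y j).
Hypothesis Y_gen : forall f, max_ideal R f ->
  exists r : 'I_n -> ps k, (forall j, R (r j)) /\ f = \sum_(j < n) r j * Y j.

Lemma leq_a l l' : (l <= l')%N -> (l' < n)%N -> (a l <= a l')%N.
Proof. by rewrite leq_eqVlt => /predU1P[-> //|lt_ll'] lt_l'n; rewrite ltnW ?a_incr. Qed.

Lemma HK_a_val l : (l < n)%N -> vset (max_ideal R) (a l) /\ ~ vset (max_ideal2 R) (a l).
Proof. by move=> lt_ln; apply/HK_a; exists l. Qed.

Section Step.
Variables (x : nat -> ps k) (i : nat).
Hypothesis lt_in : (i < n)%N.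
Hypothesis x_val : forall l, (l < i)%N -> max_ideal R (x l) /\ has_val (x l) (a l).

Let x_R l (lt_li : (l < i)%N) : R (x l) := (x_val lt_li).1.1.

Lemma polyin_val N : (N < a i)%N ->
  (forall f, max_ideal R f -> exists p, [/\ polyin x i p, p 0%N = 0 & zero_below N (f - p)]) ->
  vset (max_ideal R) N ->
  exists g, [/\ polyin x i g, g 0%N = 0, zero_below N g & g N != 0].
Proof.
move=> lt_Nai approx vN; case: (pselect (HK R N)) => [/HK_a[l [lt_ln eq_lN]]|notHK].
  subst N.
  have lt_li : (l < i)%N by rewrite ltnNge; apply/negP => le_il; have := leq_a le_il lt_ln; lia.
  have [[_ x0] [xN xz]] := x_val lt_li.
  by exists (x l); split=> //; apply: polyinX.
have [h [/max_ideal2_seqP m2h [hN hz]]] : vset (max_ideal2 R) N.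
  by apply: contrapT => notv2; apply: notHK.
have [H [pH H0 hH]] := polyin_approx_max_ideal2 approx m2h.
have eq_hH j : (j <= N)%N -> H j = h j.
  by move=> le_jN; apply/eqP; rewrite eq_sym -subr_eq0 -pscoefB hH.
exists H; split=> //; last by rewrite eq_hH.
by move=> j lt_jN; rewrite eq_hH ?hz // ltnW.
Qed.

Lemma polyin_approx N : (N <= a i)%N -> forall f, max_ideal R f ->
  exists p, [/\ polyin x i p, p 0%N = 0 & zero_below N (f - p)].
Proof.
elim: N => [|N IH] le_Nai f mf; first by exists 0; split=> //; apply: polyin0.
have [p [pp p0 fp]] := IH (ltnW le_Nai) f mf.
have m_fp : max_ideal R (f - p).
  by apply: (max_idealB y0) => //; split=> //; apply: polyin_psalg x_R pp.
case: (eqVneq ((f - p) N) 0) => [fpN|fpN].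
  by exists p; split=> // j; rewrite ltnS leq_eqVlt => /predU1P[->|/fp].
have [g [pg g0 gz gN]] : exists g, [/\ polyin x i g, g 0%N = 0, zero_below N g & g N != 0].
  by apply: polyin_val => //; [exact: IH (ltnW le_Nai) | exists (f - p)].
exists (p + psC ((f - p) N / g N) * g); split.
- by apply: polyinD pp _; apply: polyinM pg; apply: polyinC.
- by rewrite pscoefD pscoefCM p0 g0 mulr0 addr0.
- by rewrite opprD addrA; apply: zero_below_cancel_lead.
Qed.

(* If some [d l] with [l < i] is nonzero, the least such [l] gives [v(u) = a l];
   otherwise [v(u) = a i]. *)
Lemma lincomb_add_max_ideal2_val E d u :
  has_val E (a i) -> max_ideal2_seq y u -> E <> lincomb x i d + u.
Proof.
move=> [EN Ez] m2u eq_E.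
have uE : u = E - lincomb x i d by rewrite eq_E; ring.
have m2_u := max_ideal2_seqP y u; have [_ notv2] := HK_a_val lt_in.
case: (pselect (exists l, (l < i)%N && (d l != 0))) => [ex_l|no_l]; last first.
  have d0 : lincomb x i d = 0.
    apply: big1 => l _; have /eqP -> : d l == 0.
      by apply: contrapT => dl; apply: no_l; exists l; rewrite ltn_ord; apply/negP.
    by rewrite psC0E mul0r.
  by apply: notv2; exists u; split; [apply/m2_u | rewrite uE d0 subr0].
case: (ex_minnP ex_l) => l0 /andP[lt_l0i dl0] min_l0.
have lt_l0n := ltn_trans lt_l0i lt_in.
have d_lt l : (l < l0)%N -> d l = 0.
  move=> lt_ll0; apply/eqP; apply: contraTT (lt_ll0) => dl.
  by rewrite -leqNgt min_l0 // (ltn_trans lt_ll0 lt_l0i).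
have dz : zero_below (a l0) (lincomb x i d).
  apply: zero_below_sum => l _; have [lt_ll0|le_l0l] := ltnP l l0.
    by rewrite d_lt // psC0E mul0r; apply: zero_below0.
  apply: zero_belowCM; apply: zero_belowW (x_val (ltn_ord l)).2.2.
  exact: leq_a le_l0l (ltn_trans (ltn_ord l) lt_in).
have d_l0 : lincomb x i d (a l0) = d l0 * x l0 (a l0).
  rewrite /lincomb pscoef_sum (bigD1 (Ordinal lt_l0i)) //= pscoefCM big1 ?addr0 // => l ne_l.
  rewrite pscoefCM; case: (ltngtP l l0) => [lt_ll0|lt_l0l|eq_l].
  - by rewrite d_lt // mul0r.
  - by rewrite (x_val (ltn_ord l)).2.2 ?mulr0 // a_incr // (ltn_trans (ltn_ord l) lt_in).
  - by move/eqP: ne_l; case; apply: val_inj.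
have [_ notv2_l0] := HK_a_val lt_l0n; apply: notv2_l0; exists u; split; first exact/m2_u.
split; last by rewrite uE; apply: zero_belowB dz; apply: zero_belowW Ez; rewrite ltnW ?a_incr.
rewrite uE pscoefB d_l0 Ez ?a_incr // sub0r oppr_eq0 mulf_neq0 //.
by have [_ []] := x_val lt_l0i.
Qed.

Lemma generators_not_approximable :
  ~ (forall j, (j < n)%N -> exists G P,
       [/\ Y j = G + P, polyin x i P, P 0%N = 0 & zero_below (a i).+1 G]).
Proof.
move=> split_Y.
have /choice[GP GPP] : forall j, exists GP : ps k * ps k, (j < n)%N ->
    [/\ Y j = GP.1 + GP.2, polyin x i GP.2, GP.2 0%N = 0 & zero_below (a i).+1 GP.1].
  move=> j; case: (ltnP j n) => [/split_Y[G [P GP]]|_]; first by exists (G, P).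
  by exists (0, 0).
have [f [[Rf f0] [fN fz]]] := (HK_a_val lt_in).1.
have [r [Rr eq_f]] := Y_gen (conj Rf f0).
pose G := \sum_(j < n) psC (r j 0%N) * (GP j).1.
pose P := \sum_(j < n) psC (r j 0%N) * (GP j).2.
pose U := \sum_(j < n) (r j - psC (r j 0%N)) * Y j.
have eq_fGPU : f = G + P + U.
  rewrite eq_f /G /P /U -!big_split /=; apply: eq_bigr => j _.
  by have [-> _ _ _] := GPP j (ltn_ord j); ring.
have Gz : zero_below (a i).+1 G.
  by apply: zero_below_sum => j _; apply: zero_belowCM; case: (GPP j (ltn_ord j)).
have pP : polyin x i P.
  by apply: polyin_sum => j _; apply: polyinM; [apply: polyinC | case: (GPP j (ltn_ord j))].
have m2U : max_ideal2_seq y U.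
  apply: max_ideal2_seq_sum => j _; apply: max_ideal2_seqM (Y_max (ltn_ord j)).
  split; last by rewrite pscoefB subrr.
  by apply: (in_psalgB y0) => //; apply: in_psalgC.
have x_max l (lt_li : (l < i)%N) : max_ideal R (x l) := (x_val lt_li).1.
have [c0 [d [u [m2u eq_P]]]] := polyin_affine_mod_sqr y0 x_max pP.
have c00 : c0 = 0.
  have : P 0%N = 0.
    rewrite /P pscoef_sum big1 // => j _; rewrite pscoefCM.
    by have [_ _ -> _] := GPP j (ltn_ord j); rewrite mulr0.
  rewrite eq_P !pscoefD (lincomb_max_ideal y0 x_max d).2.
  by rewrite (max_ideal2_seq_max_ideal y0 m2u).2 !addr0.
apply: (@lincomb_add_max_ideal2_val (f - G) d (u + U)).
- split; first by rewrite pscoefB Gz // subr0.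
  exact: zero_belowB fz (zero_belowW (leqnSn _) Gz).
- exact: max_ideal2_seqD.
- by rewrite eq_fGPU eq_P c00 psC0E; ring.
Qed.

Lemma generator_step (tau : nat -> nat) (z : nat -> ps k) :
  (forall l, (l < i)%N -> polyin x l (z l) /\ Y (tau l) = x l + z l) ->
  exists j p, [/\ (j < n)%N, (forall l, (l < i)%N -> tau l <> j), polyin x i p,
                  p 0%N = 0 & has_val (Y j - p) (a i)].
Proof.
move=> xz; apply: contrapT => no_new; apply: generators_not_approximable => j lt_jn.
case: (pselect (exists2 l, (l < i)%N & tau l = j)) => [[l lt_li eq_j]|fresh].
  subst j; have [zl Ytau] := xz l lt_li.
  exists 0, (x l + z l); rewrite add0r; split=> //; last exact: zero_below0.
  - by apply: polyinD; [apply: polyinX | apply: polyinW (ltnW lt_li) zl].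
  - by rewrite -Ytau; case: (Y_max lt_jn).
have [p [pp p0 Yp]] := polyin_approx (leqnn (a i)) (Y_max lt_jn).
exists (Y j - p), p; split=> //; first by rewrite subrK.
move=> m; rewrite ltnS leq_eqVlt => /predU1P[->|/Yp //].
apply: contrapT => Ypa; apply: no_new; exists j, p; split=> //.
- by move=> l lt_li eq_j; apply: fresh; exists l.
- by split=> //; apply/eqP.
Qed.

End Step.

Lemma triangular_generators i : (i <= n)%N -> exists (tau : nat -> nat) (x z : nat -> ps k),
  forall l, (l < i)%N ->
  [/\ (tau l < n)%N, (forall l', (l' < i)%N -> tau l' = tau l -> l' = l),
      max_ideal R (x l) /\ has_val (x l) (a l), polyin x l (z l) /\ z l 0%N = 0
    & Y (tau l) = x l + z l].
Proof.
elim: i => [|i IH] lt_in; first by exists (fun _ => 0%N), (fun _ => 0), (fun _ => 0).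
have [tau [x [z H]]] := IH (ltnW lt_in).
have x_val l : (l < i)%N -> max_ideal R (x l) /\ has_val (x l) (a l) by case/H.
have xz l : (l < i)%N -> polyin x l (z l) /\ Y (tau l) = x l + z l by case/H=> _ _ _ [].
have [j [p [lt_jn fresh pp p0 Ypv]]] := generator_step lt_in x_val xz.
exists (fun l => if l == i then j else tau l), (fun l => if l == i then Y j - p else x l),
  (fun l => if l == i then p else z l).
have x_old l : (l < i)%N -> (if l == i then Y j - p else x l) = x l.
  by move=> lt_li; rewrite ltn_eqF.
move=> l; rewrite ltnS leq_eqVlt => /predU1P[->|lt_li]; rewrite ?eqxx.
  split=> //.
  - move=> l'; rewrite ltnS leq_eqVlt => /predU1P[-> //|lt_l'i].
    by rewrite (ltn_eqF lt_l'i) => /fresh.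
  - split=> //; apply: (max_idealB y0) (Y_max lt_jn) _; split=> //.
    by apply: (polyin_psalg y0) pp => l' /x_val[[]].
  - by split=> //; apply: eq_polyin pp => l' lt_l'i; rewrite x_old.
  - by rewrite subrK.
have [lt_tn inj xv [zl z0] Yl] := H l lt_li; rewrite (ltn_eqF lt_li); split=> //.
- move=> l'; rewrite ltnS leq_eqVlt => /predU1P[->|lt_l'i]; rewrite ?eqxx.
    by move=> eq_j; case: (fresh l lt_li).
  by rewrite (ltn_eqF lt_l'i); apply: inj.
- by split=> //; apply: eq_polyin zl => l' lt_l'l; rewrite x_old // (ltn_trans lt_l'l).
Qed.

End HerzogKunzGenerators.

Section OrdinalIndexing.
Variables (T : Type) (n : nat) (f : 'I_n -> T) (d : T).

Definition natext (l : nat) : T := if insub l is Some o then f o else d.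

Lemma natext_ord (o : 'I_n) : natext o = f o.
Proof. by rewrite /natext valK. Qed.

End OrdinalIndexing.

Lemma natext_incr n (a : 'I_n -> nat) : (forall i j : 'I_n, (i < j)%N -> (a i < a j)%N) ->
  forall l l', (l < l')%N -> (l' < n)%N -> (natext a 0%N l < natext a 0%N l')%N.
Proof.
move=> a_incr l l' lt_ll' lt_l'n; have lt_ln := ltn_trans lt_ll' lt_l'n.
by rewrite (natext_ord _ _ (Ordinal lt_ln)) (natext_ord _ _ (Ordinal lt_l'n)) a_incr.
Qed.

Lemma herzog_kunz_triangular (k : fieldType) (n : nat) (y : 'I_n -> ps k) (a : 'I_n -> nat) :
  (forall j, max_ideal (in_psalg y) (y j)) -> generates_max (in_psalg y) predT y ->
  (forall i j : 'I_n, (i < j)%N -> (a i < a j)%N) ->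
  (forall m, HK (in_psalg y) m <-> exists i, a i = m) ->
  exists (sigma : 'S_n) (x z : 'I_n -> ps k),
    forall i : 'I_n,
      [/\ in_psalg y (x i), in_psalg y (z i), has_val (x i) (a i),
          in_polyalg x i (z i) /\ (val i = 0%N -> z i =1 psC 0)
        & y (sigma i) =1 psadd (x i) (z i)].
Proof.
move=> y_max y_gen a_incr HK_a; have y0 j : y j 0%N = 0 := (y_max j).2.
have HK_A m : HK (in_psalg y) m <-> exists l, (l < n)%N /\ natext a 0%N l = m.
  rewrite HK_a; split=> [[o <-]|[l [lt_ln <-]]]; first by exists o; rewrite natext_ord.
  by exists (Ordinal lt_ln); rewrite (natext_ord _ _ (Ordinal lt_ln)).
have Y_max j : (j < n)%N -> max_ideal (in_psalg y) (natext y 0 j).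
  by move=> lt_jn; rewrite (natext_ord _ _ (Ordinal lt_jn)).
have Y_gen g : max_ideal (in_psalg y) g -> exists r : 'I_n -> ps k,
    (forall j, in_psalg y (r j)) /\ g = \sum_(j < n) r j * natext y 0 j.
  move=> /y_gen[r [Rr eq_g]]; exists r; split=> //; apply: funext => m.
  by rewrite eq_g big_psaddE; congr (_ m); apply: eq_bigr => j _; rewrite natext_ord.
have [tau [x [z H]]] := triangular_generators y0 (natext_incr a_incr) HK_A Y_max Y_gen (leqnn n).
pose sigma (o : 'I_n) : 'I_n := insubd o (tau o).
have val_sigma o : val (sigma o) = tau o by rewrite val_insubd; case: (H o (ltn_ord o)) => ->.
have sigma_inj : injective sigma.
  move=> o1 o2 /(congr1 val); rewrite !val_sigma => eq_tau; apply: val_inj.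
  by case: (H o2 (ltn_ord o2)) => _ inj _ _ _; apply: inj eq_tau.
exists (perm sigma_inj), (fun o => x o), (fun o => z o) => o.
have [_ _ [[Rx _] xv] [zp z0] Yo] := H o (ltn_ord o).
split=> //.
- by apply: (polyin_psalg y0) zp => l lt_lo; have [_ _ [[]]] := H l (ltn_trans lt_lo (ltn_ord o)).
- by rewrite -(natext_ord a 0%N).
- split; first exact: polyin_polyalg (ltnW (ltn_ord o)) zp.
  move=> o0; move: zp z0; rewrite o0 => /polyin0_const[c ->] c0.
  by rewrite -c0.
- by move=> m; rewrite permE -(natext_ord y 0) val_sigma Yo.
Qed.

Theorem mainTheorem13 (k : fieldType) (n : nat) (y : 'I_n -> ps k)
  (a : 'I_n -> nat) :
  finite_over (in_psalg y) ->
  birational (in_psalg y) ->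
  min_gen_sys (in_psalg y) y ->
  (forall i j : 'I_n, (i < j)%N -> (a i < a j)%N) ->
  (forall m, HK (in_psalg y) m <-> exists i, a i = m) ->
  exists (sigma : 'S_n) (x z : 'I_n -> ps k),
    forall i : 'I_n,
      [/\ in_psalg y (x i), in_psalg y (z i),
          has_val (x i) (a i),
          in_polyalg x i (z i) /\ (val i = 0%N -> z i =1 psC 0)
        & y (sigma i) =1 psadd (x i) (z i)].
Proof. by move=> _ _ [y_max [y_gen _]]; apply: herzog_kunz_triangular. Qed.
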